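(* Let $\alpha$ and $\beta$ be a Riemannian metric and a 1-form on a two-dimensional manifold with $\beta\ne0$, $b^2<1$ in the upper-sign case and $b^2<1/2$ in the lower-sign case, such that $$r_{ij}=2\tau\{(1\pm2b^2)a_{ij}\mp3b_ib_j\}+\frac{3}{\pm1-b^2}(b_is_j+b_js_i)$$ for a scalar function $\tau$. Define $\tilde\alpha=\sqrt{\xi\alpha^2+\eta\beta^2}$ and $\tilde\beta=\beta$, where $$\xi=\frac{(1\mp b^2)^3}{(1\pm2b^2)^{3/2}},\qquad \eta=\frac{9}{8b^2}\Big\{(1\pm2b^2)^{3/2}-\frac{1\mp2b^2+4b^4}{(1\pm2b^2)^{3/2}}\Big\}.$$ Then $\tilde r_{ij}=\dfrac{2\tau(1\mp b^2)^2}{(1\pm2b^2)^{5/2}}\,\tilde a_{ij}$, where $\tilde a_{ij}$ are the coefficients of $\tilde\alpha^2$ and $\tilde r_{ij}$ is the symmetrized covariant derivative of $\beta$ with respect to $\tilde\alpha$; moreover $\|\beta\|_{\tilde\alpha}^2=\dfrac{b^2}{(1\pm2b^2)^{3/2}}$.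
   Context: For $\alpha=\sqrt{a_{ij}y^iy^j}$ and $\beta=b_iy^i$: $b^i=a^{ij}b_j$, $b=\|\beta\|_\alpha=\sqrt{a^{ij}b_ib_j}$; $b_{i|j}$ is the covariant derivative of $\beta$ w.r.t. the Levi-Civita connection of $\alpha$, $r_{ij}=\frac12(b_{i|j}+b_{j|i})$, $s_{ij}=\frac12(b_{i|j}-b_{j|i})$, $s_j=b^is_{ij}$. Analogous quantities with tildes are taken with respect to $\tilde\alpha$. Upper signs refer to one case and lower signs to the other throughout. *)

From Stdlib Require Import Reals Lra.
Open Scope R_scope.

Definition pt := (R * R)%type.
Inductive idx := X1 | X2.

Definition sum2 (f : idx -> R) : R := f X1 + f X2.

Definition shift (p : pt) (k : idx) (t : R) : pt :=
  match k with
  | X1 => (fst p + t, snd p)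
  | X2 => (fst p, snd p + t)
  end.

Definition has_partial (f : pt -> R) (k : idx) (p : pt) (v : R) : Prop :=
  derivable_pt_lim (fun t => f (shift p k t)) 0 v.

Definition is_open (U : pt -> Prop) : Prop :=
  forall p, U p -> exists d, 0 < d /\
    forall q, Rabs (fst q - fst p) < d -> Rabs (snd q - snd p) < d -> U q.

Definition partials2 (a : idx -> idx -> pt -> R) (da : idx -> idx -> idx -> pt -> R)
  (U : pt -> Prop) : Prop :=
  forall i j k p, U p -> has_partial (a i j) k p (da i j k p).

Definition partials1 (b : idx -> pt -> R) (db : idx -> idx -> pt -> R)
  (U : pt -> Prop) : Prop :=
  forall i j p, U p -> has_partial (b i) j p (db i j p).

Definition is_riemannian (a : idx -> idx -> pt -> R) (U : pt -> Prop) : Prop :=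
  forall p, U p ->
    (forall i j, a i j p = a j i p) /\
    (forall v : idx -> R, (v X1 <> 0 \/ v X2 <> 0) ->
       0 < sum2 (fun i => sum2 (fun j => a i j p * v i * v j))).

(* pointwise algebra: g = (a_ij), dg i j k = d_k a_ij, bv = (b_i), dbv i j = d_j b_i *)
Definition det2 (g : idx -> idx -> R) : R :=
  g X1 X1 * g X2 X2 - g X1 X2 * g X2 X1.

Definition inv2 (g : idx -> idx -> R) : idx -> idx -> R :=
  fun i j => match i, j with
  | X1, X1 => g X2 X2 / det2 g
  | X1, X2 => - g X1 X2 / det2 g
  | X2, X1 => - g X2 X1 / det2 g
  | X2, X2 => g X1 X1 / det2 g
  end.

Definition christoffel (g : idx -> idx -> R) (dg : idx -> idx -> idx -> R)
  (k i j : idx) : R :=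
  / 2 * sum2 (fun l => inv2 g k l * (dg l j i + dg i l j - dg i j l)).

Definition covd (g : idx -> idx -> R) (dg : idx -> idx -> idx -> R)
  (bv : idx -> R) (dbv : idx -> idx -> R) (i j : idx) : R :=
  dbv i j - sum2 (fun k => christoffel g dg k i j * bv k).

Definition rr g dg bv dbv (i j : idx) : R :=
  / 2 * (covd g dg bv dbv i j + covd g dg bv dbv j i).
Definition ss g dg bv dbv (i j : idx) : R :=
  / 2 * (covd g dg bv dbv i j - covd g dg bv dbv j i).

Definition bup (g : idx -> idx -> R) (bv : idx -> R) (i : idx) : R :=
  sum2 (fun j => inv2 g i j * bv j).

Definition bnorm2 (g : idx -> idx -> R) (bv : idx -> R) : R :=
  sum2 (fun i => bup g bv i * bv i).

Definition sj g dg bv dbv (j : idx) : R :=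
  sum2 (fun i => bup g bv i * ss g dg bv dbv i j).

Definition atp (a : idx -> idx -> pt -> R) (p : pt) : idx -> idx -> R :=
  fun i j => a i j p.
Definition datp (da : idx -> idx -> idx -> pt -> R) (p : pt) : idx -> idx -> idx -> R :=
  fun i j k => da i j k p.
Definition batp (b : idx -> pt -> R) (p : pt) : idx -> R := fun i => b i p.
Definition dbatp (db : idx -> idx -> pt -> R) (p : pt) : idx -> idx -> R :=
  fun i j => db i j p.

(* eps = 1 : upper sign, eps = -1 : lower sign; x stands for b^2 *)
Definition xi (eps x : R) : R :=
  (1 - eps * x) ^ 3 / Rpower (1 + 2 * eps * x) (3 / 2).
Definition eta (eps x : R) : R :=
  9 / (8 * x) * (Rpower (1 + 2 * eps * x) (3 / 2)
                 - (1 - 2 * eps * x + 4 * x ^ 2) / Rpower (1 + 2 * eps * x) (3 / 2)).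

Definition atilde (eps : R) (a : idx -> idx -> pt -> R) (b : idx -> pt -> R) :
  idx -> idx -> pt -> R :=
  fun i j p =>
    let x := bnorm2 (atp a p) (batp b p) in
    xi eps x * a i j p + eta eps x * b i p * b j p.

From Stdlib Require Import Reals Lra.
From Coquelicot Require Import Coquelicot.
Open Scope R_scope.

(* Apart from the existence of d_k a~_ij, everything is pointwise algebra in the data
   g = (a_ij), b_i, d_k a_ij, d_j b_i at a single point (eps = +-1 encodes the sign).
   1. Conformal factors: writing S = sqrt (1 + 2 eps b^2), every identity about xi, eta and
      their derivatives xi', eta' becomes a rational identity in S (xi_eta_norm, coeff_bs).
   2. Linear algebra of g~ = X g + Y b b: b~^i = b^i / (X + Y b^2) (bup_deform).
   3. rr_deform: for any X, Y, X', Y', with d_k a~_ij given by the chain rule through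
      d_k(b^2) = 2 (b^i r_ik + s_k), r~_ij is an explicit combination of a_ij, b_i b_j and
      b_i s_j + b_j s_i; the identities of step 1 reduce it to c a~_ij (rr_tilde).
   4. Calculus: the chain rule along coordinate lines supplies d_k a~_ij (atilde_partials);
      d_k a_ij is symmetric because a is symmetric on the open set U, and positive
      definiteness gives det a > 0 and b^2 > 0 (point_facts). *)

Lemma Rpower_3_2 y : 0 < y -> Rpower y (3/2) = y * sqrt y.
Proof.
  intros hy. replace (3/2) with (1 + /2) by field.
  now rewrite Rpower_plus, Rpower_1, Rpower_sqrt.
Qed.

Lemma Rpower_5_2 y : 0 < y -> Rpower y (5/2) = y * y * sqrt y.
Proof.
  intros hy. replace (5/2) with (1 + 1 + /2) by field.
  now rewrite !Rpower_plus, Rpower_1, Rpower_sqrt.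
Qed.

Definition sign_range (eps x : R) : Prop :=
  (eps = 1 /\ 0 < x < 1) \/ (eps = -1 /\ 0 < x < 1/2).

Lemma sign_range_pos eps x : sign_range eps x -> 0 < 1 + 2 * eps * x.
Proof. intros [[-> ?]|[-> ?]]; lra. Qed.

Definition xi' (eps x : R) : R :=
  - 3 * eps * (1 - eps * x) ^ 2 * (2 + eps * x)
  / ((1 + 2 * eps * x) * Rpower (1 + 2 * eps * x) (3 / 2)).

Definition eta' (eps x : R) : R :=
  let y := 1 + 2 * eps * x in
  let P := Rpower y (3 / 2) in
  - eta eps x / x
  + 9 / (8 * x) * (3 * eps * P / y - (8 * x - 2 * eps) / P
                   + 3 * eps * (1 - 2 * eps * x + 4 * x ^ 2) / (y * P)).

Lemma xi_derive eps x : 0 < 1 + 2 * eps * x -> is_derive (xi eps) x (xi' eps x).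
Proof.
  intros hy. unfold xi, xi', Rpower. auto_derive.
  - repeat split; first [lra | apply Rgt_not_eq, exp_pos].
  - field. repeat split; first [lra | apply Rgt_not_eq, exp_pos].
Qed.

Lemma eta_derive eps x : 0 < 1 + 2 * eps * x -> x <> 0 -> is_derive (eta eps) x (eta' eps x).
Proof.
  intros hy hx. unfold eta', eta, Rpower. cbv zeta. auto_derive.
  - repeat split; first [lra | apply Rgt_not_eq, exp_pos].
  - field. repeat split; first [lra | apply Rgt_not_eq, exp_pos].
Qed.

(* Replace b^2 by the rational parametrisation through S = sqrt (1 + 2 eps b^2):
   b^2 = (S^2 - 1)/2 if eps = 1 and b^2 = (1 - S^2)/2 if eps = -1. *)
Ltac sqrt_param eps x hsign :=
  let hy := fresh "hy" in
  let hs := fresh "hs" in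
  pose proof hsign as hs;
  pose proof (sign_range_pos _ _ hs) as hy;
  rewrite ?Rpower_5_2, ?Rpower_3_2 by exact hy;
  pose proof (sqrt_lt_R0 _ hy);
  pose proof (sqrt_sqrt _ (Rlt_le _ _ hy));
  set (S := sqrt (1 + 2 * eps * x)) in *; clearbody S;
  destruct hs as [[-> [? ?]]|[-> [? ?]]];
  [ replace x with ((S*S-1)/2) in * by lra | replace x with ((1-S*S)/2) in * by lra ].

Section ConformalFactors.
Variables eps x : R.
Hypothesis hsign : sign_range eps x.

Lemma xi_neq0 : xi eps x <> 0.
Proof.
  assert (h : 0 < 1 - eps * x) by (destruct hsign as [[-> ?]|[-> ?]]; lra).
  unfold xi, Rdiv. apply Rmult_integral_contrapositive_currified.
  - apply pow_nonzero. lra.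
  - apply Rinv_neq_0_compat, Rgt_not_eq, exp_pos.
Qed.

Lemma sign_minus_neq0 : eps - x <> 0.
Proof. destruct hsign as [[-> ?]|[-> ?]]; lra. Qed.

Lemma xi_eta_norm : xi eps x + eta eps x * x = Rpower (1 + 2 * eps * x) (3/2).
Proof. unfold xi, eta. sqrt_param eps x hsign; field; nra. Qed.

Let Q := / Rpower (1 + 2 * eps * x) (3/2).

(* The three coefficient identities making r~ proportional to a~ (see rr_deform). *)
Lemma coeff_metric tau :
  (1 - Q * eta eps x * x) * 2 * tau * (1 + 2 * eps * x)
  + 2 * Q * tau * (1 - eps * x) * x * xi' eps x
  = 2 * tau * (1 - eps * x) ^ 2 / Rpower (1 + 2 * eps * x) (5 / 2) * xi eps x.
Proof. unfold Q, xi, eta, xi'. sqrt_param eps x hsign; field; nra. Qed.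

Lemma coeff_bb tau :
  (1 - Q * eta eps x * x) * (-6 * eps * tau)
  - 4 * Q * tau * (1 - eps * x) * (xi' eps x + eta' eps x * x)
  + 2 * Q * tau * (1 - eps * x) * x * eta' eps x
  = 2 * tau * (1 - eps * x) ^ 2 / Rpower (1 + 2 * eps * x) (5 / 2) * eta eps x.
Proof. unfold Q, eta', xi, eta, xi'. sqrt_param eps x hsign; field; repeat split; nra. Qed.

Lemma coeff_bs :
  (1 - Q * eta eps x * x) * 3 / (eps - x)
  - Q * (eps + 2 * x) / (eps - x) * (xi' eps x + eta' eps x * x) - Q * eta eps x = 0.
Proof. unfold Q, eta', xi, eta, xi'. sqrt_param eps x hsign; field; repeat split; nra. Qed.

End ConformalFactors.

Definition deform (X Y : R) (g : idx -> idx -> R) (bv : idx -> R) : idx -> idx -> R :=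
  fun i j => X * g i j + Y * bv i * bv j.

(* Twice the Christoffel symbol of the first kind, [ij, l]. *)
Definition christoffel1 (dg : idx -> idx -> idx -> R) (l i j : idx) : R :=
  dg l j i + dg i l j - dg i j l.

Section PointwiseAlgebra.
Variables (g : idx -> idx -> R) (bv : idx -> R).
Hypotheses (hsym : g X2 X1 = g X1 X2) (hdet : det2 g <> 0).

Lemma christoffel_contract dg i j :
  sum2 (fun k => christoffel g dg k i j * bv k)
  = / 2 * sum2 (fun l => bup g bv l * christoffel1 dg l i j).
Proof. unfold christoffel, bup, christoffel1, sum2, inv2. rewrite hsym. ring. Qed.

Lemma bup_lower i : bv i = sum2 (fun j => g i j * bup g bv j).
Proof.
  unfold det2 in hdet. rewrite hsym in hdet.
  destruct i; unfold bup, inv2, sum2, det2; rewrite hsym; field; exact hdet.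
Qed.

Lemma det2_deform X Y :
  det2 (deform X Y g bv) = X * (X + Y * bnorm2 g bv) * det2 g.
Proof.
  unfold det2 in hdet |- *. unfold deform, bnorm2, bup, inv2, sum2, det2.
  rewrite hsym in *. field. exact hdet.
Qed.

Lemma bup_deform X Y l :
  X <> 0 -> X + Y * bnorm2 g bv <> 0 ->
  bup (deform X Y g bv) bv l = / (X + Y * bnorm2 g bv) * bup g bv l.
Proof.
  intros hX hK.
  assert (hd : det2 (deform X Y g bv) <> 0).
  { rewrite det2_deform. repeat apply Rmult_integral_contrapositive_currified; auto. }
  assert (hKd : (X + Y * bnorm2 g bv) * det2 g <> 0)
    by (apply Rmult_integral_contrapositive_currified; auto).
  revert hd hK hKd. unfold det2 in hdet.
  unfold bup, inv2, deform, bnorm2, bup, inv2, sum2, det2. rewrite hsym in *.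
  intros hd hK hKd. destruct l; field; repeat split; auto.
  all: intro E; apply hKd; rewrite <- E; field; exact hdet.
Qed.

Lemma christoffel_sym dg k i j :
  (forall i j k, dg i j k = dg j i k) ->
  christoffel g dg k i j = christoffel g dg k j i.
Proof.
  intros hdg. destruct i, j; try reflexivity;
  unfold christoffel, sum2; rewrite !(hdg X2 X1); ring.
Qed.

Lemma contract_deform X Y (t : idx -> R) :
  X <> 0 -> X + Y * bnorm2 g bv <> 0 ->
  sum2 (fun l => bup (deform X Y g bv) bv l * t l)
  = / (X + Y * bnorm2 g bv) * sum2 (fun l => bup g bv l * t l).
Proof. intros hX hK. unfold sum2. rewrite !bup_deform by assumption. ring. Qed.

Lemma deform_sym X Y : deform X Y g bv X2 X1 = deform X Y g bv X1 X2.
Proof. unfold deform. rewrite hsym. ring. Qed.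

Lemma bnorm2_deform X Y :
  X <> 0 -> X + Y * bnorm2 g bv <> 0 ->
  bnorm2 (deform X Y g bv) bv = bnorm2 g bv / (X + Y * bnorm2 g bv).
Proof.
  intros hX hK. unfold bnorm2 at 1, sum2. rewrite !bup_deform by assumption.
  unfold bnorm2, sum2. field. exact hK.
Qed.

Lemma g_sym i j : g i j = g j i.
Proof. destruct i, j; auto. Qed.

End PointwiseAlgebra.

Definition christoffel_b (g : idx -> idx -> R) (dg : idx -> idx -> idx -> R) (bv : idx -> R)
  (i j : idx) : R :=
  sum2 (fun k => christoffel g dg k i j * bv k).

Definition bnorm2_partial (g : idx -> idx -> R) (dg : idx -> idx -> idx -> R) (bv : idx -> R)
  (dbv : idx -> idx -> R) (k : idx) : R :=
  - sum2 (fun i => sum2 (fun j => bup g bv i * bup g bv j * dg i j k))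
  + 2 * sum2 (fun i => bup g bv i * dbv i k).

(* d_k of the deformation X(b^2) g + Y(b^2) b b by the chain rule, X' and Y' being the
   derivatives of X and Y with respect to b^2. *)
Definition deform_partial (X Y X' Y' : R) (g : idx -> idx -> R) (dg : idx -> idx -> idx -> R)
  (bv : idx -> R) (dbv : idx -> idx -> R) : idx -> idx -> idx -> R :=
  fun i j k =>
    X' * bnorm2_partial g dg bv dbv k * g i j + X * dg i j k
    + Y' * bnorm2_partial g dg bv dbv k * bv i * bv j
    + Y * (dbv i k * bv j + bv i * dbv j k).

Section DeformedCovariantDerivative.
Variables (g : idx -> idx -> R) (dg : idx -> idx -> idx -> R) (bv : idx -> R)
  (dbv : idx -> idx -> R).
Hypotheses (hsym : g X2 X1 = g X1 X2) (hdet : det2 g <> 0)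
  (hdg : forall i j k, dg i j k = dg j i k).

Lemma dbv_split i j :
  dbv i j = rr g dg bv dbv i j + ss g dg bv dbv i j + christoffel_b g dg bv i j.
Proof. unfold rr, ss, covd, christoffel_b. field. Qed.

(* Gamma^k_ij b_k is symmetric, so it only enters r_ij. *)
Lemma christoffel_b_sym i j : christoffel_b g dg bv i j = christoffel_b g dg bv j i.
Proof.
  unfold christoffel_b, sum2.
  rewrite (christoffel_sym g dg X1 i j), (christoffel_sym g dg X2 i j) by exact hdg. reflexivity.
Qed.

Lemma dbv_antisym i j : dbv i j - dbv j i = 2 * ss g dg bv dbv i j.
Proof.
  unfold ss, covd. fold (christoffel_b g dg bv i j) (christoffel_b g dg bv j i).
  rewrite christoffel_b_sym. field.
Qed.

Lemma contract_g j : sum2 (fun l => bup g bv l * g l j) = bv j.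
Proof.
  rewrite (bup_lower g bv hsym hdet j).
  destruct j; unfold sum2; rewrite ?hsym; ring.
Qed.

Lemma bnorm2_partial_contract k :
  bnorm2_partial g dg bv dbv k =
  2 * (sum2 (fun i => bup g bv i * rr g dg bv dbv i k) + sj g dg bv dbv k).
Proof.
  unfold bnorm2_partial, sj. unfold sum2 at 3 4.
  rewrite !dbv_split. unfold christoffel_b. rewrite !christoffel_contract by exact hsym.
  unfold christoffel1, sum2. rewrite !(hdg X2 X1). field.
Qed.

Lemma ss_dbv i j : ss g dg bv dbv i j = / 2 * (dbv i j - dbv j i).
Proof. rewrite dbv_antisym. field. Qed.

Lemma ss_antisym i j : ss g dg bv dbv j i = - ss g dg bv dbv i j.
Proof. rewrite !ss_dbv. field. Qed.

(* b^j s_j = 0 by antisymmetry of s_ij. *)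
Lemma contract_sj : sum2 (fun j => bup g bv j * sj g dg bv dbv j) = 0.
Proof. unfold sj, sum2. rewrite !(ss_antisym X1 X2), !ss_dbv. field. Qed.

Lemma contract_christoffel1_deform X Y X' Y' i j :
  let x := bnorm2 g bv in
  let dx := bnorm2_partial g dg bv dbv in
  sum2 (fun l => bup g bv l * christoffel1 (deform_partial X Y X' Y' g dg bv dbv) l i j) =
  (X' + Y' * x) * (dx i * bv j + dx j * bv i)
  - sum2 (fun k => bup g bv k * dx k) * (X' * g i j + Y' * bv i * bv j)
  + 2 * X * christoffel_b g dg bv i j
  + Y * (x * (dbv i j + dbv j i) + 2 * (bv j * sj g dg bv dbv i + bv i * sj g dg bv dbv j)).
Proof.
  intros x dx. unfold christoffel_b. rewrite christoffel_contract by exact hsym.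
  unfold sj, x, bnorm2, deform_partial. fold dx. unfold sum2. rewrite !ss_dbv.
  pose proof (bup_lower g bv hsym hdet) as hb.
  clearbody dx. set (u := bup g bv) in *. clearbody u.
  destruct i, j; unfold christoffel1, sum2 in *; rewrite !hb; unfold sum2;
    rewrite ?hsym, ?(hdg X2 X1); field.
Qed.

Variables (tau eps : R).
Hypothesis hr : forall i j, rr g dg bv dbv i j =
  2 * tau * ((1 + 2 * eps * bnorm2 g bv) * g i j - eps * 3 * bv i * bv j)
  + 3 / (eps - bnorm2 g bv) * (bv i * sj g dg bv dbv j + bv j * sj g dg bv dbv i).
Hypothesis hex : eps - bnorm2 g bv <> 0.

Lemma contract_rr k :
  sum2 (fun i => bup g bv i * rr g dg bv dbv i k) =
  2 * tau * (1 - eps * bnorm2 g bv) * bv k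
  + 3 * bnorm2 g bv / (eps - bnorm2 g bv) * sj g dg bv dbv k.
Proof.
  set (x := bnorm2 g bv) in *.
  transitivity (2 * tau * (1 + 2 * eps * x) * sum2 (fun l => bup g bv l * g l k)
                - 6 * eps * tau * x * bv k
                + 3 / (eps - x) * (x * sj g dg bv dbv k
                                   + bv k * sum2 (fun j => bup g bv j * sj g dg bv dbv j))).
  - unfold sum2 at 1. rewrite !hr. unfold x, bnorm2, sum2. field. exact hex.
  - rewrite contract_g, contract_sj. field. exact hex.
Qed.

Lemma bnorm2_partial_formula k :
  bnorm2_partial g dg bv dbv k =
  4 * tau * (1 - eps * bnorm2 g bv) * bv k
  + 2 * (eps + 2 * bnorm2 g bv) / (eps - bnorm2 g bv) * sj g dg bv dbv k.
Proof. rewrite bnorm2_partial_contract, contract_rr. field. exact hex. Qed.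

Lemma contract_bnorm2_partial :
  sum2 (fun k => bup g bv k * bnorm2_partial g dg bv dbv k)
  = 4 * tau * (1 - eps * bnorm2 g bv) * bnorm2 g bv.
Proof.
  transitivity (4 * tau * (1 - eps * bnorm2 g bv) * bnorm2 g bv
     + 2 * (eps + 2 * bnorm2 g bv) / (eps - bnorm2 g bv)
       * sum2 (fun k => bup g bv k * sj g dg bv dbv k)).
  - unfold sum2 at 1. rewrite !bnorm2_partial_formula. unfold bnorm2, sum2. field. exact hex.
  - rewrite contract_sj. ring.
Qed.

(* Main computation: r~_ij of any deformation, expanded in a_ij, b_i b_j, b_i s_j + b_j s_i.
   The Gamma b terms cancel because b~^i = b^i / (X + Y b^2). *)
Lemma rr_deform X Y X' Y' i j :
  X <> 0 -> X + Y * bnorm2 g bv <> 0 ->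
  let x := bnorm2 g bv in
  let Q := / (X + Y * x) in
  rr (deform X Y g bv) (deform_partial X Y X' Y' g dg bv dbv) bv dbv i j =
  ((1 - Q * Y * x) * 2 * tau * (1 + 2 * eps * x) + 2 * Q * tau * (1 - eps * x) * x * X')
    * g i j
  + ((1 - Q * Y * x) * (-6 * eps * tau) - 4 * Q * tau * (1 - eps * x) * (X' + Y' * x)
     + 2 * Q * tau * (1 - eps * x) * x * Y') * (bv i * bv j)
  + ((1 - Q * Y * x) * 3 / (eps - x) - Q * (eps + 2 * x) / (eps - x) * (X' + Y' * x) - Q * Y)
    * (bv i * sj g dg bv dbv j + bv j * sj g dg bv dbv i).
Proof.
  intros hX hK x Q.
  unfold rr, covd. rewrite !christoffel_contract by (apply deform_sym; exact hsym).
  rewrite !contract_deform by assumption.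
  rewrite !contract_christoffel1_deform, contract_bnorm2_partial, !bnorm2_partial_formula.
  rewrite !dbv_split, !hr, (christoffel_b_sym j i), (ss_antisym i j), (g_sym g hsym j i).
  unfold Q, x. field. split; assumption.
Qed.

End DeformedCovariantDerivative.

Section Pointwise.
Variables (eps tau : R) (g : idx -> idx -> R) (dg : idx -> idx -> idx -> R) (bv : idx -> R)
  (dbv : idx -> idx -> R).
Hypotheses (hsym : g X2 X1 = g X1 X2) (hdet : det2 g <> 0)
  (hdg : forall i j k, dg i j k = dg j i k) (hsign : sign_range eps (bnorm2 g bv)).

Let x := bnorm2 g bv.
Let gt := deform (xi eps x) (eta eps x) g bv.

Lemma norm_factor_neq0 : xi eps x + eta eps x * x <> 0.
Proof. rewrite xi_eta_norm by exact hsign. apply Rgt_not_eq, exp_pos. Qed.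

Lemma bnorm2_tilde : bnorm2 gt bv = x / Rpower (1 + 2 * eps * x) (3 / 2).
Proof.
  unfold gt. rewrite bnorm2_deform, xi_eta_norm; auto using xi_neq0, norm_factor_neq0.
Qed.

Lemma rr_tilde
  (hr : forall i j, rr g dg bv dbv i j =
     2 * tau * ((1 + 2 * eps * x) * g i j - eps * 3 * bv i * bv j)
     + 3 / (eps - x) * (bv i * sj g dg bv dbv j + bv j * sj g dg bv dbv i)) i j :
  rr gt (deform_partial (xi eps x) (eta eps x) (xi' eps x) (eta' eps x) g dg bv dbv) bv dbv i j
  = 2 * tau * (1 - eps * x) ^ 2 / Rpower (1 + 2 * eps * x) (5 / 2) * gt i j.
Proof.
  pose proof (rr_deform g dg bv dbv hsym hdet hdg tau eps hr (sign_minus_neq0 _ _ hsign)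
    (xi eps x) (eta eps x) (xi' eps x) (eta' eps x) i j (xi_neq0 _ _ hsign)
    norm_factor_neq0) as h.
  cbv zeta in h. unfold gt. rewrite h, xi_eta_norm by exact hsign.
  rewrite coeff_metric, coeff_bb, coeff_bs by exact hsign.
  unfold deform. ring.
Qed.

End Pointwise.

Definition posdef2 (g : idx -> idx -> R) : Prop :=
  forall v : idx -> R, (v X1 <> 0 \/ v X2 <> 0) ->
    0 < sum2 (fun i => sum2 (fun j => g i j * v i * v j)).

Section PositiveDefinite.
Variables (g : idx -> idx -> R) (bv : idx -> R).
Hypotheses (hsym : g X2 X1 = g X1 X2) (hpos : posdef2 g).

(* det g > 0, by testing g on (1, 0) and on (-g_12, g_11). *)
Lemma posdef_det : 0 < det2 g.
Proof.
  assert (h11 : 0 < g X1 X1).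
  { pose proof (hpos (fun i => match i with X1 => 1 | X2 => 0 end) (or_introl R1_neq_R0)) as h.
    unfold sum2 in h. simpl in h. lra. }
  assert (hv : (fun i => match i with X1 => - g X1 X2 | X2 => g X1 X1 end) X2 <> 0)
    by (simpl; lra).
  pose proof (hpos _ (or_intror hv)) as h. unfold sum2 in h. simpl in h.
  unfold det2. rewrite hsym in *. nra.
Qed.

Lemma posdef_bnorm2 : (bv X1 <> 0 \/ bv X2 <> 0) -> 0 < bnorm2 g bv.
Proof.
  intros hb0.
  assert (hdet : det2 g <> 0) by (apply Rgt_not_eq, posdef_det).
  pose proof (bup_lower g bv hsym hdet) as hb.
  assert (hx : bnorm2 g bv =
               sum2 (fun i => sum2 (fun j => g i j * bup g bv i * bup g bv j))).
  { unfold bnorm2. unfold sum2 at 1 2. rewrite (hb X1), (hb X2). unfold sum2.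
    rewrite hsym. ring. }
  rewrite hx. apply hpos.
  destruct (Req_dec (bup g bv X1) 0) as [e1|e1]; [|now left].
  destruct (Req_dec (bup g bv X2) 0) as [e2|e2]; [|now right].
  exfalso. rewrite (hb X1), (hb X2) in hb0. unfold sum2 in hb0. rewrite e1, e2 in hb0.
  destruct hb0 as [h|h]; apply h; ring.
Qed.

End PositiveDefinite.

Lemma bnorm2_derive (A : idx -> idx -> R -> R) (B : idx -> R -> R)
  (dA : idx -> idx -> idx -> R) (dB : idx -> idx -> R) k t0 :
  (forall i j, is_derive (A i j) t0 (dA i j k)) -> (forall i, is_derive (B i) t0 (dB i k)) ->
  A X2 X1 t0 = A X1 X2 t0 -> det2 (fun i j => A i j t0) <> 0 ->
  is_derive (fun t => bnorm2 (fun i j => A i j t) (fun i => B i t)) t0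
    (bnorm2_partial (fun i j => A i j t0) dA (fun i => B i t0) dB k).
Proof.
  intros hA hB hs hd. unfold det2 in hd.
  unfold bnorm2_partial, bnorm2, bup, inv2, sum2, det2. cbv beta.
  auto_derive.
  - repeat split; first [ exact (ex_intro _ _ (hA _ _)) | exact (ex_intro _ _ (hB _))
                        | (intro E; apply hd; rewrite <- E; ring) ].
  - rewrite !(is_derive_unique _ _ _ (hA _ _)), !(is_derive_unique _ _ _ (hB _)).
    rewrite hs in *. field. exact hd.
Qed.

Lemma deform_derive (Xf Yf xf A Bi Bj : R -> R) (dX dY dx dA dBi dBj t0 : R) :
  is_derive xf t0 dx -> is_derive Xf (xf t0) dX -> is_derive Yf (xf t0) dY ->
  is_derive A t0 dA -> is_derive Bi t0 dBi -> is_derive Bj t0 dBj ->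
  is_derive (fun t => Xf (xf t) * A t + Yf (xf t) * Bi t * Bj t) t0
    (dX * dx * A t0 + Xf (xf t0) * dA + dY * dx * Bi t0 * Bj t0
     + Yf (xf t0) * (dBi * Bj t0 + Bi t0 * dBj)).
Proof.
  intros hx hX hY hA hBi hBj. auto_derive.
  - repeat split; first [ exact (ex_intro _ _ hx) | exact (ex_intro _ _ hX)
      | exact (ex_intro _ _ hY) | exact (ex_intro _ _ hA) | exact (ex_intro _ _ hBi)
      | exact (ex_intro _ _ hBj) ].
  - replace (Derive (fun t : R => xf t) t0) with dx by (symmetry; now apply is_derive_unique).
    replace (Derive (fun y : R => Xf y) (xf t0)) with dX by (symmetry; now apply is_derive_unique).
    replace (Derive (fun y : R => Yf y) (xf t0)) with dY by (symmetry; now apply is_derive_unique).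
    replace (Derive (fun t : R => A t) t0) with dA by (symmetry; now apply is_derive_unique).
    replace (Derive (fun t : R => Bi t) t0) with dBi by (symmetry; now apply is_derive_unique).
    replace (Derive (fun t : R => Bj t) t0) with dBj by (symmetry; now apply is_derive_unique).
    ring.
Qed.

Lemma shift0 p k : shift p k 0 = p.
Proof. destruct p as [p1 p2], k; simpl; f_equal; ring. Qed.

Lemma shift_in_open U p k :
  is_open U -> U p -> exists d, 0 < d /\ forall t, Rabs t < d -> U (shift p k t).
Proof.
  intros hU Up. destruct (hU p Up) as [d [hd hq]]. exists d. split; [exact hd|].
  intros t ht. apply hq; destruct k; cbn [shift fst snd];
    first [ rewrite Rminus_diag, Rabs_R0; exact hd
          | replace (fst p + t - fst p) with t by ring; exact ht
          | replace (snd p + t - snd p) with t by ring; exact ht ].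
Qed.

Lemma has_partial_unique_open U f h k p v w :
  is_open U -> U p -> (forall q, U q -> f q = h q) ->
  has_partial f k p v -> has_partial h k p w -> v = w.
Proof.
  intros hU Up hfh hv hw.
  apply is_derive_Reals in hv, hw.
  destruct (shift_in_open U p k hU Up) as [d [hd hq]].
  assert (Hloc : locally 0 (fun t => f (shift p k t) = h (shift p k t))).
  { exists (mkposreal d hd). intros t ht. apply hfh, hq.
    change (Rabs (t - 0) < d) in ht. now rewrite Rminus_0_r in ht. }
  pose proof (is_derive_ext_loc _ _ _ _ Hloc hv) as hv'.
  now rewrite <- (is_derive_unique _ _ _ hv'), <- (is_derive_unique _ _ _ hw).
Qed.

Definition atilde_partial (eps : R) (a : idx -> idx -> pt -> R)
  (da : idx -> idx -> idx -> pt -> R) (b : idx -> pt -> R) (db : idx -> idx -> pt -> R) :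
  idx -> idx -> idx -> pt -> R :=
  fun i j k p =>
    let x := bnorm2 (atp a p) (batp b p) in
    deform_partial (xi eps x) (eta eps x) (xi' eps x) (eta' eps x)
      (atp a p) (datp da p) (batp b p) (dbatp db p) i j k.

Lemma atilde_partials U a da b db eps :
  partials2 a da U -> partials1 b db U ->
  (forall p, U p -> a X2 X1 p = a X1 X2 p /\ 0 < det2 (atp a p)
                    /\ sign_range eps (bnorm2 (atp a p) (batp b p))) ->
  partials2 (atilde eps a b) (atilde_partial eps a da b db) U.
Proof.
  intros hpa hpb hpt i j k p Up. destruct (hpt p Up) as [h21 [hdet hsign]].
  assert (hA : forall i j, is_derive (fun t => a i j (shift p k t)) 0 (da i j k p))
    by (intros; now apply is_derive_Reals, hpa).
  assert (hB : forall i, is_derive (fun t => b i (shift p k t)) 0 (db i k p))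
    by (intros; now apply is_derive_Reals, hpb).
  pose proof (bnorm2_derive (fun i j t => a i j (shift p k t)) (fun i t => b i (shift p k t))
    (fun i j k => da i j k p) (fun i k => db i k p) k 0 hA hB) as hx.
  cbv beta in hx. rewrite !shift0 in hx.
  specialize (hx h21 (Rgt_not_eq _ _ hdet)).
  assert (hy := sign_range_pos _ _ hsign).
  assert (hx0 : bnorm2 (atp a p) (batp b p) <> 0)
    by (destruct hsign as [[_ ?]|[_ ?]]; lra).
  apply is_derive_Reals.
  set (x := bnorm2 (atp a p) (batp b p)) in *.
  pose proof (deform_derive (xi eps) (eta eps)
    (fun t => bnorm2 (atp a (shift p k t)) (batp b (shift p k t)))
    (fun t => a i j (shift p k t)) (fun t => b i (shift p k t)) (fun t => b j (shift p k t))
    (xi' eps x) (eta' eps x) _ _ _ _ 0 hx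
    ltac:(cbv beta; rewrite !shift0; exact (xi_derive _ _ hy))
    ltac:(cbv beta; rewrite !shift0; exact (eta_derive _ _ hy hx0))
    (hA i j) (hB i) (hB j)) as h.
  cbv beta in h. rewrite !shift0 in h. exact h.
Qed.

Lemma point_facts U a b eps p :
  is_riemannian a U -> U p -> (b X1 p <> 0 \/ b X2 p <> 0) ->
  ((eps = 1 /\ forall p, U p -> bnorm2 (atp a p) (batp b p) < 1) \/
   (eps = -1 /\ forall p, U p -> bnorm2 (atp a p) (batp b p) < 1 / 2)) ->
  a X2 X1 p = a X1 X2 p /\ 0 < det2 (atp a p)
  /\ sign_range eps (bnorm2 (atp a p) (batp b p)).
Proof.
  intros hR Up hb0 heps. destruct (hR p Up) as [hs hpos].
  assert (h21 : a X2 X1 p = a X1 X2 p) by apply hs.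
  assert (hx := posdef_bnorm2 (atp a p) (batp b p) h21 hpos hb0).
  split; [exact h21 | split; [exact (posdef_det _ h21 hpos) |]].
  destruct heps as [[-> h]|[-> h]]; [left | right]; auto.
Qed.

Theorem mainTheorem15
  (U : pt -> Prop) (a : idx -> idx -> pt -> R) (da : idx -> idx -> idx -> pt -> R)
  (b : idx -> pt -> R) (db : idx -> idx -> pt -> R) (tau : pt -> R) (eps : R) :
  is_open U ->
  is_riemannian a U ->
  partials2 a da U ->
  partials1 b db U ->
  (forall p, U p -> b X1 p <> 0 \/ b X2 p <> 0) ->
  ((eps = 1 /\ forall p, U p -> bnorm2 (atp a p) (batp b p) < 1) \/
   (eps = -1 /\ forall p, U p -> bnorm2 (atp a p) (batp b p) < 1 / 2)) ->
  (forall p, U p -> forall i j : idx,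
     let g := atp a p in let dg := datp da p in
     let bv := batp b p in let dbv := dbatp db p in
     let b2 := bnorm2 g bv in
     rr g dg bv dbv i j =
       2 * tau p * ((1 + 2 * eps * b2) * g i j - eps * 3 * bv i * bv j)
       + 3 / (eps - b2) * (bv i * sj g dg bv dbv j + bv j * sj g dg bv dbv i)) ->
  exists dat : idx -> idx -> idx -> pt -> R,
    partials2 (atilde eps a b) dat U /\
    forall p, U p ->
      let b2 := bnorm2 (atp a p) (batp b p) in
      let gt := atp (atilde eps a b) p in
      (forall i j : idx,
         rr gt (datp dat p) (batp b p) (dbatp db p) i j =
           2 * tau p * (1 - eps * b2) ^ 2 / Rpower (1 + 2 * eps * b2) (5 / 2) * gt i j) /\
      bnorm2 gt (batp b p) = b2 / Rpower (1 + 2 * eps * b2) (3 / 2).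
Proof.
  intros hU hR hpa hpb hb0 heps hr.
  assert (hpt : forall p, U p -> a X2 X1 p = a X1 X2 p /\ 0 < det2 (atp a p)
                                 /\ sign_range eps (bnorm2 (atp a p) (batp b p)))
    by (intros p Up; exact (point_facts U a b eps p hR Up (hb0 p Up) heps)).
  exists (atilde_partial eps a da b db).
  split; [exact (atilde_partials U a da b db eps hpa hpb hpt) |].
  intros p Up. destruct (hpt p Up) as [hsym [hdet hsign]].
  assert (hdg : forall i j k, da i j k p = da j i k p).
  { intros i j k. apply (has_partial_unique_open U (a i j) (a j i) k p); auto.
    intros q Uq. apply (proj1 (hR q Uq)). }
  split.
  - exact (rr_tilde eps (tau p) (atp a p) (datp da p) (batp b p) (dbatp db p)
             hsym (Rgt_not_eq _ _ hdet) hdg hsign (hr p Up)).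
  - exact (bnorm2_tilde eps (atp a p) (batp b p) hsym (Rgt_not_eq _ _ hdet) hsign).
Qed.
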